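(* Let $K\ge L\ge T\ge 2$ be integers, let $\kappa,\lambda$ be the smallest non-negative integers such that $K+1+\kappa$ and $L+1+\lambda$ are coprime to $T-1$, and put $K^\star=K+1+\kappa$, $L^\star=L+1+\lambda$, $\bar T=T-1$, $q=K^\star L^\star+\bar T^2$. Then $K^\star$, $L^\star$ and $\bar T$ are each coprime to $q$. Moreover, for every integer $x$ coprime to $q$ there exists a unique integer $y\in\{0,\dots,q-1\}$ with $x\bar T+yK^\star\equiv 0\pmod q$, and this $y$ is coprime to $q$. *)

From mathcomp Require Import all_boot all_order all_algebra.
Set Implicit Arguments. Unset Strict Implicit. Unset Printing Implicit Defensive.
Import Order.TTheory GRing.Theory Num.Theory.

Definition is_least_shift (n m k : nat) : Prop :=
  coprime (n + 1 + k) m /\ (forall j, j < k -> ~~ coprime (n + 1 + j) m).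

(* Since q = Ks Ls + Tb^2, q is congruent to Tb^2 modulo Ks and Ls, and to
   Ks Ls modulo Tb; as Ks and Ls are coprime to Tb, all three are coprime to q.
   Hence Ks is invertible modulo q, the congruence has the single solution
   y = - x Tb / Ks in [0, q), and y is a unit because x, Tb and Ks are. *)
From mathcomp Require Import all_boot all_order all_algebra.
From mathcomp Require Import zify.

Set Implicit Arguments.
Unset Strict Implicit.
Unset Printing Implicit Defensive.
Import Order.TTheory GRing.Theory Num.Theory.
Local Open Scope ring_scope.

Lemma coprime_mulDX (a b c n : nat) :
  coprime a c -> coprime b c ->
  [/\ coprime a (a * b + c ^ n.+1), coprime b (a * b + c ^ n.+1)
    & coprime c (a * b + c ^ n.+1)].
Proof.
move=> cac cbc; split.
- by rewrite /coprime mulnC gcdnMDl; apply: coprimeXr.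
- by rewrite /coprime gcdnMDl; apply: coprimeXr.
- by rewrite /coprime addnC expnSr gcdnMDl -/(coprime _ _) coprimeMr
     ![coprime c _]coprime_sym cac cbc.
Qed.

Lemma eqz_mod_coprimez (m n d : int) :
  (m == n %[mod d])%Z -> coprimez m d = coprimez n d.
Proof. by move=> /eqP mn; rewrite /coprimez -gcdz_modl mn gcdz_modl. Qed.

Section LinearCongruence.

Variables (q a : int).
Hypotheses (q_gt0 : 0 < q) (coprime_aq : coprimez a q).

Lemma eqz_mod_mul2r (y y' : int) :
  (y * a == y' * a %[mod q])%Z = (y == y' %[mod q])%Z.
Proof.
by rewrite !eqz_mod_dvd -mulrBl Gauss_dvdzl // coprimez_sym.
Qed.

Lemma modz_inv_exists : exists u : int, (u * a == 1 %[mod q])%Z.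
Proof.
have [u [v uv]] := Bezoutz a q.
exists u; rewrite (eqP coprime_aq) in uv.
by rewrite -uv addrC modzMDl.
Qed.

Lemma linear_congruence_unique_solution (b : int) :
  exists y : int,
    [/\ 0 <= y < q, (b + y * a == 0 %[mod q])%Z &
        forall y', 0 <= y' < q -> (b + y' * a == 0 %[mod q])%Z -> y' = y].
Proof.
have q_neq0 : q != 0 by rewrite gt_eqF.
have [u ua] := modz_inv_exists.
have y_range : 0 <= (- b * u %% q)%Z < q.
  by rewrite modz_ge0 //= -[X in _ < X]gtr0_norm // ltz_mod.
have y_sol : (b + (- b * u %% q)%Z * a == 0 %[mod q])%Z.
  rewrite -modzDmr modzMml modzDmr -mulrA -modzDmr -modzMmr (eqP ua).
  by rewrite modzMmr modzDmr mulr1 subrr.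
exists (- b * u %% q)%Z; split => // y' y'_range y'_sol.
rewrite -(modz_small y'_range) -(modz_small y_range); apply/eqP.
by rewrite -eqz_mod_mul2r -(eqz_modDl b) (eqP y'_sol) (eqP y_sol).
Qed.

Lemma linear_congruence_coprime (b y : int) :
  coprimez b q -> (b + y * a == 0 %[mod q])%Z -> coprimez y q.
Proof.
move=> cbq sol.
have ya : (y * a == - b %[mod q])%Z by rewrite -(eqz_modDl b) subrr.
have : coprimez (y * a) q.
  by rewrite (eqz_mod_coprimez ya) coprimez_sym coprimezN coprimez_sym.
by rewrite coprimezMl => /andP[].
Qed.

End LinearCongruence.

Theorem claim1 (K L T kappa lambda : nat)
  (hKL : (L <= K)%N) (hLT : (T <= L)%N) (hT : (2 <= T)%N)
  (hkappa : is_least_shift K T.-1 kappa)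
  (hlambda : is_least_shift L T.-1 lambda) :
  let Ks := (K + 1 + kappa)%N in
  let Ls := (L + 1 + lambda)%N in
  let Tb := T.-1 in
  let q := (Ks * Ls + Tb ^ 2)%N in
  [/\ coprime Ks q, coprime Ls q, coprime Tb q &
    forall x : int, coprimez x q%:Z ->
      exists y : int,
        [/\ 0 <= y < q%:Z,
            (x * Tb%:Z + y * Ks%:Z == 0 %[mod q%:Z])%Z,
            coprimez y q%:Z &
            forall y' : int, 0 <= y' < q%:Z ->
              (x * Tb%:Z + y' * Ks%:Z == 0 %[mod q%:Z])%Z -> y' = y]].
Proof.
move=> Ks Ls Tb q.
have [[cKT _] [cLT _]] := (hkappa, hlambda).
have [cKq cLq cTq] := coprime_mulDX 1 cKT cLT.
split => // x cxq.
have q_gt0 : 0 < q%:Z by rewrite ltz_nat /q /Ks /Ls; lia.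
have cxTq : coprimez (x * Tb%:Z) q%:Z by rewrite coprimezMl cxq.
have [y [y_range y_sol y_uniq]] :=
  linear_congruence_unique_solution q_gt0 (cKq : coprimez Ks q) (x * Tb%:Z).
by exists y; split => //; apply: linear_congruence_coprime y_sol.
Qed.
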